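(* Let $m,n\ge 1$ and let $\Gamma$ be an acyclic $(m+n-1)$-graph such that the graph $\Delta_0(\Gamma)$ (defined in the context) is also acyclic. If $\Delta_1(\Gamma)$ has $s$ connected components and $\Delta_0(\Gamma)$ has $t$ connected components, then $\Gamma$ has exactly $s+t-1$ connected components.
   Context: For $N\ge1$, an $N$-graph is a graph with vertex set $\{1,\dots,N\}$ and a finite collection of oriented edges between distinct vertices (multiple edges allowed, no loops). It is acyclic if it contains no unoriented cycle (in particular, no two edges join the same pair of vertices). For an $(m+n-1)$-graph $\Gamma$, group its vertices as $\{1,\dots,m\},\{m+1\},\dots,\{m+n-1\}$. Then $\Delta_1(\Gamma)$ is the $m$-graph which is the subgraph of $\Gamma$ on vertices $1,\dots,m$ with all edges of $\Gamma$ among them, and $\Delta_0(\Gamma)$ is the $n$-graph obtained by clasping the vertices $1,\dots,m$ into a single vertex labeled $1$ (vertex $a\ge m+1$ becomes vertex $a-m+1$), keeping every edge of $\Gamma$ whose endpoints lie in different groups (as an edge between the images of its endpoints) and discarding the edges among $1,\dots,m$. *)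

From mathcomp Require Import all_boot.
Set Implicit Arguments. Unset Strict Implicit. Unset Printing Implicit Defensive.

(* An N-graph: vertex set 'I_N (vertex a of the paper, 1-based, is the
   ordinal a-1), and a finite list of oriented edges (source, target);
   multiple edges are allowed (the list may contain repetitions). *)
Definition ngraph (N : nat) := seq ('I_N * 'I_N).

Definition loopless N (G : ngraph N) : bool := all (fun e => e.1 != e.2) G.

Definition joins N (e : 'I_N * 'I_N) (x y : 'I_N) : bool :=
  (e == (x, y)) || (e == (y, x)).

Definition has_cycle N (G : ngraph N) : Prop :=
  exists (es : seq nat) (vs : seq 'I_N),
    [/\ 0 < size es, size vs = size es, uniq es && uniq vs,
        all (fun i => i < size G) es &
        forall (i : nat) (x0 : 'I_N), i < size es ->
          joins (nth (x0, x0) G (nth 0 es i))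
                (nth x0 vs i) (nth x0 vs ((i.+1) %% size es))].

Definition acyclic N (G : ngraph N) : Prop := ~ has_cycle G.

Definition adj N (G : ngraph N) : rel 'I_N :=
  fun x y => has (fun e => joins e x y) G.

Definition ncomp N (G : ngraph N) : nat := n_comp (connect (adj G)) predT.

Definition Delta1 (m n : nat) (G : ngraph (m + n - 1)) : ngraph m :=
  pmap (fun e : 'I_(m + n - 1) * 'I_(m + n - 1) =>
          match insub (val e.1) : option 'I_m, insub (val e.2) : option 'I_m with
          | Some a, Some b => Some (a, b)
          | _, _ => None
          end) G.

Definition clasp (m i : nat) : nat := if i < m then 0 else i - m + 1.

(* Delta_0: clasp vertices 0..m-1 into vertex 0, keep edges whose endpoints
   lie in different groups, i.e. not both in {0..m-1} *)
Definition Delta0 (m n : nat) (G : ngraph (m + n - 1)) : ngraph n :=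
  pmap (fun e : 'I_(m + n - 1) * 'I_(m + n - 1) =>
          if (val e.1 < m) && (val e.2 < m) then None else
          match insub (clasp m (val e.1)) : option 'I_n,
                insub (clasp m (val e.2)) : option 'I_n with
          | Some a, Some b => Some (a, b)
          | _, _ => None
          end) G.

From mathcomp Require Import all_boot zify.
Set Implicit Arguments. Unset Strict Implicit. Unset Printing Implicit Defensive.

(* Adding an edge between two different components merges them, lowering the
   number of components by one, and in an acyclic graph every edge joins two
   different components of the graph formed by the edges before it.  Build G
   edge by edge: an edge inside {1..m} is added to Delta1 G and not to
   Delta0 G, any other edge is added to Delta0 G and not to Delta1 G, and as
   Delta1 G (a subgraph of G) and Delta0 G are acyclic each addition lowers
   exactly one of their counts by one, as it does for G.  The edgeless graphs
   have m, n and m + n - 1 components, so c(G) + 1 = c(Delta1 G) + c(Delta0 G)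
   throughout. *)

Section AddEdge.
Variables (T : finType) (r : rel T) (a b : T).
Hypothesis r_sym : symmetric r.
Local Notation C := (connect r).

Definition add_edge : rel T :=
  fun x y => [|| r x y, (x == a) && (y == b) | (x == b) && (y == a)].

Let C_sym : connect_sym r. Proof. exact: sym_connect_sym. Qed.

Lemma add_edge_sym : symmetric add_edge.
Proof.
move=> x y; rewrite /add_edge r_sym; congr (_ || _).
by rewrite orbC; congr (_ || _); apply: andbC.
Qed.

Lemma connect_add_edge x y :
  connect add_edge x y = [|| C x y, C x a && C b y | C x b && C a y].
Proof.
have r_sub : subrel C (connect add_edge).
  by apply: connect_sub => u v ruv; apply: connect1; rewrite /add_edge ruv.
have ab : connect add_edge a b by apply: connect1; rewrite /add_edge !eqxx orbT.
have ba : connect add_edge b a by rewrite (sym_connect_sym add_edge_sym).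
apply/idP/idP; last first.
  case/or3P=> [/r_sub // | /andP[xa b_y] | /andP[xb ay]].
    exact: connect_trans (r_sub _ _ xa) (connect_trans ab (r_sub _ _ b_y)).
  exact: connect_trans (r_sub _ _ xb) (connect_trans ba (r_sub _ _ ay)).
case/connectP=> p + ->; elim: p x => [|z p IHp] x /=; first by rewrite connect0.
case/andP=> /or3P[xz | /andP[/eqP-> /eqP->] | /andP[/eqP-> /eqP->]] /IHp.
  by rewrite !(same_connect C_sym (connect1 xz)).
all: by rewrite !connect0; case/or3P=> [-> | /andP[_ ->] | /andP[_ ->]]; rewrite ?orbT.
Qed.

Lemma closure2E x : (x \in closure r (pred2 a b)) = C x a || C x b.
Proof.
apply/pred0Pn/orP => [[z /andP[/= xz /pred2P[]<-]] | [xa | xb]];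
  [by left | by right | |].
  by exists a; rewrite /= !inE xa eqxx.
by exists b; rewrite /= !inE xb eqxx orbT.
Qed.

Lemma n_comp_add_edge : ~~ C a b -> (n_comp add_edge T).+1 = n_comp r T.
Proof.
(* Inside the closure of {a, b} the two components merge, outside it nothing changes. *)
move=> not_ab; set A := closure r (pred2 a b).
rewrite (n_compC A r) (n_compC A add_edge) (n_comp_closure2 C_sym) not_ab.
have -> : n_comp add_edge A = 1.
  rewrite -(n_comp_connect (sym_connect_sym add_edge_sym) a).
  apply: eq_n_comp_r => y; rewrite closure2E inE connect_add_edge connect0.
  by rewrite (negbTE not_ab) orbF !(C_sym y).
suff -> : n_comp add_edge [predC A] = n_comp r [predC A] by [].
apply: eq_card => x; rewrite !inE; case xA: (x \in A); rewrite ?andbF //= !andbT.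
suff E : connect add_edge x =1 C x by rewrite /roots /root (eq_pick E).
move=> y; rewrite connect_add_edge.
by move: xA; rewrite closure2E => /norP[/negbTE-> /negbTE->]; rewrite orbF.
Qed.
End AddEdge.

Lemma connect_idem (T : finType) (r : rel T) : connect (connect r) =2 connect r.
Proof.
move=> x y; apply/idP/idP; first exact: connect_sub.
by apply: connect_sub => u v /connect1/connect1.
Qed.

Lemma connect_homo (T U : finType) (r : rel T) (r' : rel U) (h : T -> U) :
  {homo h : x y / r x y >-> r' x y} ->
  {homo h : x y / connect r x y >-> connect r' x y}.
Proof.
move=> hom x _ /connectP[p rp ->]; apply/connectP; exists (map h p).
  exact: homo_path rp.
by rewrite last_map.
Qed.

Section Graphs.
Variable N : nat.
Implicit Types (G : ngraph N) (e : 'I_N * 'I_N) (x y u v : 'I_N).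

Lemma joinsC e x y : joins e x y = joins e y x.
Proof. by rewrite /joins orbC. Qed.

Lemma adj_sym G : symmetric (adj G).
Proof. by move=> x y; apply: eq_has => e; rewrite joinsC. Qed.

Lemma joins_endpoint e x y u v : joins e x y -> joins e u v -> x = u \/ x = v.
Proof.
case: e => c d; rewrite /joins !xpair_eqE.
by do 2!case/orP=> /andP[/eqP ? /eqP ?]; subst; auto.
Qed.

Lemma adj_rcons G e : adj (rcons G e) =2 add_edge (adj G) e.1 e.2.
Proof.
move=> x y; rewrite /adj has_rcons /add_edge orbC; congr (_ || _).
case: e => c d; rewrite /joins !xpair_eqE /= !(eq_sym c) !(eq_sym d).
by rewrite [(y == c) && _]andbC.
Qed.

Lemma ncomp_nil : ncomp ([::] : ngraph N) = N.
Proof.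
rewrite /ncomp (eq_n_comp (connect_idem _)) -[RHS]card_ord.
apply: eq_card => x; rewrite !inE andbT; apply/eqP.
by have /connectP[[|z p] //= _ ->] := connect_root (adj [::]) x.
Qed.

Lemma ncomp_rcons G e :
  ~~ connect (adj G) e.1 e.2 -> (ncomp (rcons G e)).+1 = ncomp G.
Proof.
move=> not_e; rewrite /ncomp !(eq_n_comp (connect_idem _)).
rewrite (eq_n_comp (eq_connect (adj_rcons G e))).
exact: n_comp_add_edge (@adj_sym G) not_e.
Qed.

Lemma has_cycle_rcons G e : has_cycle G -> has_cycle (rcons G e).
Proof.
case=> es [vs [es_gt0 size_vs uniq_esvs es_G es_joins]].
exists es, vs; split => // [|i x0 lt_i].
  by apply/allP => i /(allP es_G); rewrite size_rcons => /ltnW.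
by rewrite nth_rcons (allP es_G) ?mem_nth //; apply: es_joins.
Qed.

Lemma acyclic_rcons G e : acyclic (rcons G e) -> acyclic G.
Proof. by move=> acyc /(has_cycle_rcons e). Qed.

Lemma uniq_joins_nth_inj (vs : seq 'I_N) x0 e i j :
  uniq vs -> i < (size vs).-1 -> j < (size vs).-1 ->
  joins e (nth x0 vs i) (nth x0 vs i.+1) ->
  joins e (nth x0 vs j) (nth x0 vs j.+1) -> i = j.
Proof.
move=> uniq_vs lt_i lt_j ei ej.
have nth_inj k l : k < size vs -> l < size vs -> nth x0 vs k = nth x0 vs l -> k = l.
  by move=> lt_k lt_l /eqP; rewrite nth_uniq // => /eqP.
case: (joins_endpoint ei ej) => /nth_inj Eij; try lia.
by case: (joins_endpoint ej ei) => /nth_inj Eji; lia.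
Qed.

Lemma cycle_of_connect G e : connect (adj G) e.1 e.2 -> has_cycle (rcons G e).
Proof.
(* A simple path from e.1 to e.2, closed up by e itself, whose index is size G. *)
case: e => a b /= /connectP[p0 + ->] => /shortenP[p adj_p uniq_vs _].
move/(pathP a): adj_p => adj_p; set vs := a :: p; set k := size p.
pose f i := find (fun e => joins e (nth a vs i) (nth a vs i.+1)) G.
have f_joins i e0 : i < k ->
    f i < size G /\ joins (nth e0 G (f i)) (nth a vs i) (nth a vs i.+1).
  move=> lt_i; have has_e := adj_p i lt_i.
  by split; [rewrite -has_find | exact: (nth_find e0 has_e)].
have f_inj : {in gtn k &, injective f}.
  move=> i j lt_i lt_j fij; have [_ ei] := f_joins i (a, a) lt_i.
  have [_ ej] := f_joins j (a, a) lt_j; rewrite fij in ei.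
  exact: uniq_joins_nth_inj uniq_vs lt_i lt_j ei ej.
exists (rcons (mkseq f k) (size G)), vs.
rewrite size_rcons size_mkseq rcons_uniq uniq_vs.
rewrite (introT (mkseq_uniqP f k) f_inj) !andbT.
split => // [||i x0 lt_i].
- apply/mapP=> -[i]; rewrite mem_iota add0n => /f_joins-/(_ (a, a))[lt_fi _] E.
  by rewrite E ltnn in lt_fi.
- rewrite all_rcons size_rcons ltnSn; apply/allP => x /mapP[i].
  by rewrite mem_iota add0n => /f_joins-/(_ (a, a))[lt_fi _] ->; apply: ltnW.
rewrite !(set_nth_default a x0) ?ltn_mod //.
have [lt_ik | ge_ik] := ltnP i k.
  have [lt_fi f_i_joins] := f_joins i (x0, x0) lt_ik.
  by rewrite !nth_rcons size_mkseq lt_ik nth_mkseq // lt_fi modn_small.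
have -> : i = k by lia.
rewrite !nth_rcons size_mkseq ltnn eqxx ltnn eqxx modnn.
by rewrite /joins (last_nth a) eqxx orbT.
Qed.

Lemma ncomp_rcons_acyclic G e :
  acyclic (rcons G e) -> (ncomp (rcons G e)).+1 = ncomp G.
Proof. by move=> acyc; apply/ncomp_rcons/(contra_notN _ acyc)/cycle_of_connect. Qed.
End Graphs.

Lemma insub_ord k i (lt_ik : i < k) : insub i = Some (Ordinal lt_ik).
Proof. by rewrite insubT. Qed.

Lemma insub_ordF k i : k <= i -> insub i = None :> option 'I_k.
Proof. by move=> le_ki; apply: (insubN 'I_k); rewrite -leqNgt. Qed.

Lemma insub_ord_val k i (x : 'I_k) : insub i = Some x -> val x = i.
Proof. by case: insubP => [y _ <- [->] | //]. Qed.

Section Deltas.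
Variables m n : nat.
Hypothesis n_gt0 : 0 < n.
Local Notation N := (m + n - 1).
Local Notation inner e := ((val e.1 < m) && (val e.2 < m)).
Implicit Types (G : ngraph N) (e : 'I_N * 'I_N).

Lemma clasp_lt (x : 'I_N) : clasp m x < n.
Proof. by have := ltn_ord x; rewrite /clasp; case: (ltnP x m); lia. Qed.

Definition clasp_ord (x : 'I_N) : 'I_n := Ordinal (clasp_lt x).

Lemma leq_m_N : m <= N. Proof. by lia. Qed.

Lemma Delta1_rcons_inner G e (lt1 : val e.1 < m) (lt2 : val e.2 < m) :
  Delta1 (rcons G e) = rcons (Delta1 G) (Ordinal lt1, Ordinal lt2).
Proof. by rewrite /Delta1 -!cats1 pmap_cat /= (insub_ord lt1) (insub_ord lt2). Qed.

Lemma Delta1_rcons_outer G e : ~~ inner e -> Delta1 (rcons G e) = Delta1 G.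
Proof.
rewrite /Delta1 -!cats1 pmap_cat /= negb_and -!leqNgt.
by case/orP=> /insub_ordF->; [|case: insub]; rewrite cats0.
Qed.

Lemma Delta0_rcons_inner G e : inner e -> Delta0 (rcons G e) = Delta0 G.
Proof. by move=> inner_e; rewrite /Delta0 -!cats1 pmap_cat /= inner_e cats0. Qed.

Lemma Delta0_rcons_outer G e : ~~ inner e ->
  Delta0 (rcons G e) = rcons (Delta0 G) (clasp_ord e.1, clasp_ord e.2).
Proof.
move=> outer_e; rewrite /Delta0 -!cats1 pmap_cat /= (negbTE outer_e).
by rewrite !(insub_ord (clasp_lt _)).
Qed.

Lemma adj_Delta1 G x y :
  adj (Delta1 G) x y -> adj G (widen_ord leq_m_N x) (widen_ord leq_m_N y).
Proof.
case/hasP=> e /[!mem_pmap] /mapP[[c d] cdG] + cd_joins.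
case E1: insub => [a|//]; case E2: insub => [b|//] [e_ab].
apply/hasP; exists (c, d) => //.
move: cd_joins; rewrite e_ab /joins !xpair_eqE -!(inj_eq val_inj) /=.
by rewrite (insub_ord_val E1) (insub_ord_val E2).
Qed.

Lemma ncomp_Delta1_rcons_inner G e (lt1 : val e.1 < m) (lt2 : val e.2 < m) :
  acyclic (rcons G e) -> (ncomp (Delta1 (rcons G e))).+1 = ncomp (Delta1 G).
Proof.
move=> acyc; rewrite (Delta1_rcons_inner _ lt1 lt2); apply: ncomp_rcons => /=.
apply: contra_notN acyc => /(connect_homo (@adj_Delta1 G)) connect_e.
apply: cycle_of_connect; move: connect_e.
by congr (connect _ _ _); apply: val_inj.
Qed.

Lemma ncomp_Delta_sum G : acyclic G -> acyclic (Delta0 G) ->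
  (ncomp G).+1 = ncomp (Delta1 G) + ncomp (Delta0 G).
Proof.
elim/last_ind: G => [|G e IHG] acyc acyc0; first by rewrite /= !ncomp_nil; lia.
have acycG := acyclic_rcons acyc; have ncomp_Ge := ncomp_rcons_acyclic acyc.
have [inner_e | outer_e] := boolP (inner e).
  have [lt1 lt2] := andP inner_e.
  rewrite (Delta0_rcons_inner _ inner_e) in acyc0 *.
  have := ncomp_Delta1_rcons_inner lt1 lt2 acyc; have := IHG acycG acyc0; lia.
rewrite (Delta1_rcons_outer _ outer_e) (Delta0_rcons_outer _ outer_e) in acyc0 *.
have := ncomp_rcons_acyclic acyc0; have := IHG acycG (acyclic_rcons acyc0); lia.
Qed.
End Deltas.

Theorem lemma3p7 (m n : nat) (hm : 0 < m) (hn : 0 < n)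
  (G : ngraph (m + n - 1)) (s t : nat) :
  loopless G -> acyclic G -> acyclic (Delta0 G) ->
  ncomp (Delta1 G) = s -> ncomp (Delta0 G) = t ->
  ncomp G = s + t - 1.
Proof.
move=> _ acyc acyc0 <- <-; have := ncomp_Delta_sum hn acyc acyc0; lia.
Qed.
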